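(* Let $V$ be a set and $(\mathcal{H}_\ell)_{\ell\in\mathbb{Z}}$ a hypergraph chain over $V$ with Colorful Helly Number $k$. Let $S\subset V$ be a finite subset with $|S|=n$, where $n$ is sufficiently large (in terms of $k$). If for some $t\in\mathbb{Z}$ and $c\in(0,1)$ the inequality $\omega_k(\mathcal{H}_{t+1}|_S)\le cn/2$ holds, then for any $i\in\{1,\dots,k\}$ and any family $\mathcal{F}_i\subset\binom{S}{i}$ with $|\mathcal{F}_i|\ge c\binom{n}{i}$, there exist a family $\mathcal{F}_{i-1}\subset\binom{S}{i-1}$ and a set $M\in\binom{S}{k}\setminus\mathcal{H}_t$ such that $|\mathcal{F}_{i-1}|\ge\left(\frac{c}{12k^2}\right)^k\binom{n}{i-1}$ and $A\cup\{v\}\in\mathcal{F}_i$ for all $A\in\mathcal{F}_{i-1}$ and all $v\in M$.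
   Context: A hypergraph on $V$ is a family $\mathcal{H}\subset 2^V$; it is downwards closed if $H\in\mathcal{H}$, $G\subset H$ imply $G\in\mathcal{H}$. A hypergraph chain over $V$ is a sequence $(\mathcal{H}_\ell)_{\ell\in\mathbb{Z}}$ of downwards closed hypergraphs on $V$ with $\mathcal{H}_\ell\subset\mathcal{H}_{\ell+1}$. For $S_1,\dots,S_k\subset V$, $F\subset V$ is a colorful selection if there is a surjection $\phi:\{1,\dots,k\}\to F$ with $\phi(i)\in S_i$; these form $S_1\otimes\dots\otimes S_k$. The chain has Colorful Helly Number $k$ if for all finite $S_1,\dots,S_k\subset V$ and $\ell$ with $S_1\otimes\dots\otimes S_k\subset\mathcal{H}_\ell$, some $S_j\in\mathcal{H}_{\ell+1}$. $\binom{S}{i}$ denotes the set of $i$-element subsets of $S$. For a hypergraph $\mathcal{H}$ and finite $S$, $\omega_k(\mathcal{H}|_S)$ is the largest size of $K\subset S$ with $\binom{K}{k}\subset\mathcal{H}$. *)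

From HB Require Import structures.
From mathcomp Require Import all_boot all_order all_algebra.
From mathcomp Require Import finmap.
From mathcomp Require Import boolp.
Set Implicit Arguments. Unset Strict Implicit. Unset Printing Implicit Defensive.
Import Order.TTheory GRing.Theory Num.Theory.
Local Open Scope fset_scope.

(* A hypergraph on V is a family of finite subsets of V, given as a predicate.
   (Only finite hyperedges matter for all notions below.) *)
Definition hypergraph (V : choiceType) := {fset V} -> Prop.

Definition down_closed (V : choiceType) (H : hypergraph V) : Prop :=
  forall A B : {fset V}, B `<=` A -> H A -> H B.

Definition hyp_chain (V : choiceType) (H : int -> hypergraph V) : Prop :=
  (forall l, down_closed (H l)) /\ (forall l (A : {fset V}), H l A -> H (l + 1)%R A).

Definition colorful_sel (V : choiceType) (k : nat) (S : 'I_k -> {fset V})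
    (F : {fset V}) : Prop :=
  exists phi : 'I_k -> V,
    (forall i, phi i \in S i) /\ F = [fset phi i | i in 'I_k].

Definition colorful_helly (V : choiceType) (H : int -> hypergraph V) (k : nat) : Prop :=
  forall (S : 'I_k -> {fset V}) (l : int),
    (forall F, colorful_sel S F -> H l F) -> exists j : 'I_k, H (l + 1)%R (S j).

Definition in_binom (V : choiceType) (S : {fset V}) (i : nat) (A : {fset V}) : Prop :=
  A `<=` S /\ #|` A| = i.

Definition omega (V : choiceType) (k : nat) (H : hypergraph V) (S : {fset V}) : nat :=
  \max_(K <- fpowerset S | `[< forall A, in_binom K k A -> H A >]) #|` K|.

From HB Require Import structures.
From mathcomp Require Import all_boot all_order all_algebra.
From mathcomp Require Import finmap boolp.
From mathcomp Require Import ring lra zify.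
Import Order.TTheory GRing.Theory Num.Theory.
Set Implicit Arguments. Unset Strict Implicit. Unset Printing Implicit Defensive.

(* For an (i-1)-set A, the link of A is the set of x with A + x in F_i; double
   counting makes the links large on average.  In a link W larger than
   omega_k(H_{t+1}) the clique bound lets us pack p pairwise disjoint k-sets
   outside H_{t+1} with |W| <= omega + k p, and colorful Helly turns every k of
   them into a transversal k-set outside H_t, so W contains at least
   binom(p, k) >= (p / k)^k such k-sets.  Summing over A and averaging over the
   binom(n, k) candidate k-sets gives one k-set M outside H_t that lies in the
   links of many A. *)

Lemma bin_le_exp n m : 'C(n, m) <= n ^ m.
Proof.
elim: m n => [|m IH] [|n] //.
apply: (@leq_trans (m.+1 * 'C(n.+1, m.+1))); first by rewrite leq_pmull.
rewrite -mul_bin_diag expnS leq_mul2l /=; apply: leq_trans (IH n) _.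
by case: m {IH} => // m; rewrite leq_exp2r.
Qed.

Section BinomialLowerBounds.
Local Open Scope ring_scope.
Variable R : realFieldType.

Lemma exp_div_le_bin p m : (0 < m <= p)%N -> (p%:R / m%:R) ^+ m <= 'C(p, m)%:R :> R.
Proof.
case/andP; elim: m p => [//|[|m] IH] [|p] // _ mp; first by rewrite expr1 divr1 bin1.
have m_gt0 : (0 : R) < m.+1%:R by rewrite ltr0n.
have m1_gt0 : (0 : R) < m.+2%:R by rewrite ltr0n.
have -> : 'C(p.+1, m.+2)%:R = p.+1%:R / m.+2%:R * 'C(p, m.+1)%:R :> R.
  apply: (mulfI (lt0r_neq0 m1_gt0)); rewrite mulrA mulrCA divff ?lt0r_neq0 // mulr1.
  by rewrite -!natrM -mul_bin_diag.
rewrite exprS ler_wpM2l ?divr_ge0 ?ler0n //; apply: le_trans (IH p isT mp).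
apply: lerXn2r; rewrite ?nnegrE ?divr_ge0 ?ler0n //.
by rewrite ler_pdivrMr // mulrAC ler_pdivlMr // -!natrM ler_nat; nia.
Qed.

Lemma affine_le_bin (z : R) p k : (0 < k)%N -> 1 <= z ->
  z ^+ k.-1 * (p%:R / k%:R - z) <= 'C(p, k)%:R.
Proof.
move=> k_gt0 z_ge1; have z_ge0 : 0 <= z by lra.
have k_pos : (0 : R) < k%:R by rewrite ltr0n.
have [pk_lt_z | z_le_pk] := ltrP (p%:R / k%:R) z.
  by apply: le_trans (ler0n _ _); rewrite mulr_ge0_le0 ?exprn_ge0 //; lra.
have kp : (k <= p)%N.
  have : 1 <= p%:R / k%:R :> R by lra.
  by rewrite ler_pdivlMr // mul1r ler_nat.
apply: le_trans (exp_div_le_bin (_ : (0 < k <= p)%N)); last by rewrite k_gt0.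
rewrite -(prednK k_gt0) exprS prednK // mulrC.
apply: ler_pM; rewrite ?exprn_ge0 //; first by lra.
  by rewrite lerBlDr lerDl.
by apply: lerXn2r; rewrite ?nnegrE //; lra.
Qed.

End BinomialLowerBounds.

Lemma exists_popular (I T : finType) (P : pred I) (U : {set {set T}})
    (F : I -> {set {set T}}) : (forall A, F A \subset U) ->
  exists M, \sum_(A | P A) #|F A| <= #|U| * #|[set A | P A & M \in F A]|.
Proof.
move=> sFU; pose wt M := #|[set A | P A & M \in F A]|.
have [M _ wt_max] := @arg_maxnP _ set0 predT wt isT.
exists M; rewrite -sum_nat_const.
under eq_bigr => A _ do rewrite -sum1_card.
rewrite (exchange_big_dep (mem U)) /=; last by move=> A M' _; apply: (subsetP (sFU A)).
by apply: leq_sum => M' _; rewrite sum1dep_card; apply: wt_max.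
Qed.

Section Link.
Variables (T : finType) (F : {set {set T}}).

Definition link (A : {set T}) := [set x | (x \notin A) && (x |: A \in F)].

Lemma leq_mul_card_sum_link i : 0 < i -> (forall B, B \in F -> #|B| = i) ->
  i * #|F| <= \sum_(A : {set T} | #|A| == i.-1) #|link A|.
Proof.
move=> i_gt0 cardF.
rewrite mulnC -sum_nat_const (eq_bigr _ (fun B FB => esym (cardF B FB))).
under eq_bigr => B _ do rewrite -sum1_card.
under [X in _ <= X]eq_bigr => A _ do rewrite -sum1_card.
rewrite (exchange_big_dep predT) // [X in _ <= X](exchange_big_dep predT) //=.
apply: leq_sum => x _; rewrite !sum1dep_card.
apply: leq_trans (leq_imset_card (fun A => x |: A) _); apply: subset_leq_card.
apply/subsetP => B; rewrite inE => /andP[FB xB]; apply/imsetP; exists (B :\ x).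
  by rewrite !inE eqxx setD1K //= FB andbT -(cardF B FB) (cardsD1 x B) xB.
by rewrite setD1K.
Qed.

End Link.

Section NonEdges.
Variables (T : finType) (k w : nat) (H0 H1 : pred {set T}).
Hypothesis k_gt0 : 0 < k.
Hypothesis H0_sub_H1 : forall X, H0 X -> H1 X.
Hypothesis clique_bound : forall X : {set T},
  (forall Y : {set T}, Y \subset X -> #|Y| = k -> H1 Y) -> #|X| <= w.
Hypothesis colorful : forall E : 'I_k -> {set T}, (forall j, ~~ H1 (E j)) ->
  exists2 phi : 'I_k -> T, (forall j, phi j \in E j) & ~~ H0 [set phi j | j in 'I_k].

Definition non_edges (W : {set T}) :=
  [set M : {set T} | [&& M \subset W, #|M| == k & ~~ H0 M]].

Definition packing (W : {set T}) (P : {set {set T}}) :=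
  [forall E in P, [&& E \subset W, #|E| == k & ~~ H1 E]] && trivIset P.

Lemma packing_mem W P E :
  packing W P -> E \in P -> [/\ E \subset W, #|E| = k & ~~ H1 E].
Proof. by case/andP => /forall_inP PE _ /PE /and3P[-> /eqP-> ->]. Qed.

Lemma card_cover_packing W P : packing W P -> #|cover P| = k * #|P|.
Proof.
move=> packP; have /andP[_ /eqP <-] := packP.
by rewrite mulnC -sum_nat_const; apply: eq_bigr => E /(packing_mem packP)[].
Qed.

Lemma exists_packing W : exists2 P, packing W P & #|W| <= w + k * #|P|.
Proof.
have packing0 : packing W set0.
  rewrite /packing /trivIset /cover !big_set0 cards0 andbT.
  by apply/forall_inP => E; rewrite inE.
have [P maxP _] := maxset_exists packing0; have packP := maxsetp maxP.
exists P => //; rewrite -(card_cover_packing packP).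
suff : #|W :\: cover P| <= w.
  by have := cardsD W (cover P); have := subset_leq_card (subsetIr W (cover P)); lia.
apply: clique_bound => Y sYW cardY; apply: contraT => nH1Y.
have [sYC sYW'] : Y \subset ~: cover P /\ Y \subset W.
  by split; apply: subset_trans sYW _; rewrite setDE ?subsetIr ?subsetIl.
have [trivYP YnP] : trivIset (Y |: P) /\ Y \notin P.
  apply: trivIsetU1; last 2 first.
  - by case/andP: packP.
  - by apply/negP => /(packing_mem packP)[_ card0 _]; move: k_gt0; rewrite -card0 cards0.
  move=> E PE; apply: disjointWl sYC _; rewrite disjoint_sym disjoints_subset setCK.
  exact: bigcup_sup.
have packYP : packing W (Y |: P).
  rewrite /packing trivYP andbT; apply/forall_inP => E.
  by case/setU1P => [->|/(packing_mem packP)[-> -> ->]]; rewrite ?sYW' ?cardY eqxx.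
by move: YnP; rewrite -(maxsetsup maxP packYP (subsetUr _ _)) setU11.
Qed.

Lemma card_non_edges W P : packing W P -> 'C(#|P|, k) <= #|non_edges W|.
Proof.
move=> packP; have /andP[_ /trivIsetP trivP] := packP.
pose meets (M : {set T}) := [set E in P | M :&: E != set0].
rewrite -cards_draws; apply: leq_trans (leq_imset_card meets (non_edges W)).
apply: subset_leq_card; apply/subsetP => J; rewrite inE => /andP[sJP /eqP cardJ].
have [E E_inj imE] : exists2 E : 'I_k -> {set T}, injective E & E @: 'I_k = J.
  rewrite -cardJ; exists enum_val; first exact: enum_val_inj.
  apply/setP => E; apply/imsetP/idP => [[j _ ->] | JE]; first exact: enum_valP.
  by exists (enum_rank_in JE E); rewrite ?enum_rankK_in.
have PE j : E j \in P by apply: (subsetP sJP); rewrite -imE imset_f.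
have nH1E j : ~~ H1 (E j) by case: (packing_mem packP (PE j)).
have [phi phiE nH0] := colorful nH1E.
have phi_in E' j : E' \in P -> phi j \in E' -> E' = E j.
  move=> PE' phiE'; apply: contraTeq (phiE j) => nE.
  have := trivP _ _ PE' (PE j) nE; rewrite disjoints_subset => /subsetP/(_ _ phiE').
  by rewrite inE.
have phi_inj : injective phi.
  by move=> j j' eq_phi; apply/E_inj/phi_in; rewrite ?PE // -eq_phi.
apply/imsetP; exists [set phi j | j in 'I_k].
  rewrite inE (card_imset _ phi_inj) card_ord eqxx nH0 !andbT.
  apply/subsetP => _ /imsetP[j _ ->].
  by have [sEW _ _] := packing_mem packP (PE j); apply: (subsetP sEW).
apply/setP => E'; rewrite inE.
apply/idP/andP => [JE' | [PE' /set0Pn[_ /setIP[/imsetP[j _ ->]]]]].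
  split; first exact: (subsetP sJP).
  move: JE'; rewrite -imE => /imsetP[j _ ->]; apply/set0Pn.
  by exists (phi j); rewrite inE imset_f ?phiE.
by move=> /(phi_in _ _ PE') ->; rewrite -imE imset_f.
Qed.

Lemma non_edges_neq0 (W : {set T}) : w < #|W| -> non_edges W != set0.
Proof.
move=> wW; have [P packP cardW] := exists_packing W.
have /set0Pn[E PE] : P != set0.
  apply: contraTneq wW => P0; rewrite -leqNgt.
  by move: cardW; rewrite P0 cards0 muln0 addn0.
have [sEW cardE nH1E] := packing_mem packP PE.
apply/set0Pn; exists E; rewrite inE sEW cardE eqxx /=.
by apply: contra nH1E; apply: H0_sub_H1.
Qed.

Local Open Scope ring_scope.
Variable R : realFieldType.

Lemma affine_le_card_non_edges (z : R) (W : {set T}) : 1 <= z ->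
  z ^+ k.-1 * ((#|W|%:R - w%:R) / k%:R ^+ 2 - z) <= #|non_edges W|%:R.
Proof.
move=> z_ge1; have [P packP cardW] := exists_packing W.
have bin_le : 'C(#|P|, k)%:R <= #|non_edges W|%:R :> R by rewrite ler_nat card_non_edges.
apply: le_trans (le_trans (affine_le_bin #|P| k_gt0 z_ge1) bin_le).
have k_pos : (0 : R) < k%:R by rewrite ltr0n.
rewrite ler_wpM2l ?exprn_ge0 ?lerD2r //; first lra.
rewrite expr2 invfM mulrA ler_pM2r ?invr_gt0 // ler_pdivrMr //.
by move: cardW; rewrite -(ler_nat R) natrD natrM; lra.
Qed.

Variables (c : R) (i : nat) (F : {set {set T}}).
Hypothesis c_gt0 : 0 < c.
Hypothesis i_gt0 : (0 < i)%N.
Hypothesis i_le_k : (i <= k)%N.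
Hypothesis T_large : (12 * k <= #|T|)%N.
Hypothesis w_small : w%:R <= c * #|T|%:R / 2.
Hypothesis cardF : forall B, B \in F -> #|B| = i.
Hypothesis F_dense : c * 'C(#|T|, i)%:R <= #|F|%:R.

Local Notation n := #|T|.
Local Notation nsets := 'C(#|T|, i.-1).

Lemma card_T_gt0 : (0 < n)%N.
Proof. by apply: leq_trans T_large; rewrite muln_gt0 k_gt0. Qed.

Lemma sum_const_draws (x : R) : \sum_(A : {set T} | #|A| == i.-1) x = nsets%:R * x.
Proof.
rewrite -card_draws mulr_natl -sumr_const.
by apply: eq_bigl => A; rewrite inE.
Qed.

(* Since [n - (i - 1) >= 11 n / 12] and [w <= c n / 2], each (i-1)-set has on
   average an excess of at least [5 c n / 12] over [w]. *)
Lemma sum_link_excess : 5 * (c * n%:R * nsets%:R) <=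
  12 * \sum_(A : {set T} | #|A| == i.-1) (#|link F A|%:R - w%:R).
Proof.
have sum_link : c * (n - i.-1)%:R * nsets%:R <=
    (\sum_(A : {set T} | #|A| == i.-1) #|link F A|)%:R.
  apply: le_trans (_ : i%:R * #|F|%:R <= _).
    have := mul_bin_left n i.-1; rewrite prednK // => binE.
    by rewrite -mulrA -natrM -binE natrM mulrCA ler_wpM2l ?ler0n.
  by rewrite -natrM ler_nat leq_mul_card_sum_link.
have c_nsets_ge0 : 0 <= c * nsets%:R by rewrite mulr_ge0 ?ler0n ?ltW.
have n_sub_i : 11 * (c * n%:R * nsets%:R) <= 12 * (c * (n - i.-1)%:R * nsets%:R).
  have : (11 * n <= 12 * (n - i.-1))%N by lia.
  rewrite -(ler_nat R) !natrM => n_le.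
  have -> : 11 * (c * n%:R * nsets%:R) = 11 * n%:R * (c * nsets%:R) by ring.
  have -> : 12 * (c * (n - i.-1)%:R * nsets%:R) = 12 * (n - i.-1)%:R * (c * nsets%:R).
    by ring.
  by rewrite ler_wpM2r.
have w_nsets : w%:R * nsets%:R <= c * n%:R / 2 * nsets%:R by rewrite ler_wpM2r ?ler0n.
by rewrite sumrB sum_const_draws -natr_sum; lra.
Qed.

Lemma exists_link_large : exists2 A : {set T}, #|A| == i.-1 & (w < #|link F A|)%N.
Proof.
have /existsP[A /andP[]] :
    [exists A : {set T}, (#|A| == i.-1) && (w < #|link F A|)%N].
  apply: contraLR sum_link_excess; rewrite negb_exists => /forallP small.
  rewrite -ltNge.
  have nsets_gt0 : (0 < nsets)%N by rewrite bin_gt0; lia.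
  apply: (@le_lt_trans _ _ 0); last by rewrite !mulr_gt0 ?ltr0n ?card_T_gt0.
  rewrite pmulr_rle0 // sumr_le0 // => A cardA.
  by move: (small A); rewrite cardA /= -leqNgt subr_le0 ler_nat.
by exists A.
Qed.

Lemma sum_non_edges_link_gt0 :
  (0 < \sum_(A : {set T} | #|A| == i.-1) #|non_edges (link F A)|)%N.
Proof.
have [A cardA wA] := exists_link_large.
by rewrite (bigD1 A) //= addn_gt0 card_gt0 non_edges_neq0.
Qed.

Local Notation delta := (c / (12 * (k ^ 2)%:R)).

(* [affine_le_card_non_edges] with [z = 3 delta n]: the average excess
   [5 delta n k^2] leaves [2 delta n] per set once [z] is subtracted. *)
Lemma sum_non_edges_link_ge : 1 <= 3 * (delta * n%:R) ->
  (delta * n%:R) ^+ k * nsets%:R <=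
  (\sum_(A : {set T} | #|A| == i.-1) #|non_edges (link F A)|)%:R.
Proof.
set y := delta * n%:R => z_ge1.
have k_pos : (0 : R) < k%:R by rewrite ltr0n.
have y_ge0 : 0 <= y by lra.
rewrite natr_sum.
apply: le_trans (ler_sum _ (fun A _ => affine_le_card_non_edges (link F A) z_ge1)).
rewrite -mulr_sumr sumrB -mulr_suml sum_const_draws.
have ck : c * n%:R = 12 * k%:R ^+ 2 * y by rewrite /y natrX; field; rewrite lt0r_neq0.
have := sum_link_excess; rewrite ck.
set S := \sum_(A | _) _ => excess.
have S_ge : 5 * y * nsets%:R <= S / k%:R ^+ 2 by rewrite ler_pdivlMr ?exprn_gt0 //; lra.
have yk : y ^+ k <= (3 * y) ^+ k.-1 * y.
  by rewrite -(prednK k_gt0) exprSr ler_wpM2r // lerXn2r ?nnegrE //; lra.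
have z_ge0 : 0 <= (3 * y) ^+ k.-1 by rewrite exprn_ge0 //; lra.
apply: le_trans (_ : (3 * y) ^+ k.-1 * (y * nsets%:R) <= _).
  by rewrite mulrA ler_wpM2r.
rewrite ler_wpM2l //; have : 0 <= y * nsets%:R by rewrite mulr_ge0.
lra.
Qed.

Lemma delta_gt0 : 0 < delta.
Proof. by rewrite divr_gt0 // mulr_gt0 ?ltr0n ?expn_gt0 ?k_gt0. Qed.

(* When [3 delta n < 1] the bound is at most [1], and one non-edge suffices. *)
Lemma weight_lower_bound m :
    (\sum_(A : {set T} | #|A| == i.-1) #|non_edges (link F A)| <= 'C(n, k) * m)%N ->
  delta ^+ k * nsets%:R <= m%:R.
Proof.
move=> sum_le; set y := delta * n%:R.
have n_gt0 := card_T_gt0.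
have delta_ge0 := ltW delta_gt0.
have y_nk : delta ^+ k * n%:R ^+ k = y ^+ k by rewrite /y [RHS]exprMn.
have bin_nk : ('C(n, k) <= n ^ k)%N := bin_le_exp n k.
have [y_small | y_large] := ltrP (3 * y) 1.
  have m_gt0 : (0 < m)%N.
    by have := leq_trans sum_non_edges_link_gt0 sum_le; rewrite muln_gt0 => /andP[].
  apply: (@le_trans _ _ 1); last by rewrite ler1n.
  apply: (@le_trans _ _ (delta ^+ k * n%:R ^+ k)).
    rewrite ler_wpM2l ?exprn_ge0 // -natrX ler_nat.
    by apply: leq_trans (bin_le_exp _ _) _; rewrite leq_pexp2l //; lia.
  have y_ge0 : 0 <= y by rewrite mulr_ge0 ?ler0n.
  by rewrite y_nk exprn_ile1 //; lra.
have nk_gt0 : (0 : R) < n%:R ^+ k by rewrite exprn_gt0 ?ltr0n.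
rewrite -(ler_pM2r nk_gt0) mulrAC y_nk.
apply: le_trans (sum_non_edges_link_ge y_large) _.
by rewrite -natrX -natrM ler_nat mulnC (leq_trans sum_le) // leq_mul2r bin_nk orbT.
Qed.

Theorem exists_popular_non_edge : exists M : {set T}, [/\ #|M| = k, ~~ H0 M &
  delta ^+ k * nsets%:R <=
  #|[set A : {set T} | (#|A| == i.-1) && (M \subset link F A)]|%:R].
Proof.
have sub_draws A : non_edges (link F A) \subset [set M : {set T} | #|M| == k].
  by apply/subsetP => M; rewrite !inE => /and3P[].
have [M] := exists_popular (fun A : {set T} => #|A| == i.-1) sub_draws.
rewrite card_draws => /weight_lower_bound; set CM := [set A | _] => CM_large.
have [A0] : exists A0, A0 \in CM.
  apply/set0Pn; rewrite -card_gt0 -(ltr0n R); apply: lt_le_trans CM_large.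
  by rewrite mulr_gt0 ?exprn_gt0 ?delta_gt0 ?ltr0n ?bin_gt0 //; lia.
rewrite inE => /andP[_]; rewrite inE => /and3P[_ /eqP cardM nH0M].
exists M; split => //; apply: le_trans CM_large _; rewrite ler_nat subset_leq_card //.
by apply/subsetP => A; rewrite !inE => /andP[-> /and3P[]].
Qed.

End NonEdges.

Section Lift.
Local Open Scope fset_scope.
Variables (V : choiceType) (S : {fset V}).

Definition lift (X : {set S}) : {fset V} := [fset val x | x in X].

Lemma lift_sub X : lift X `<=` S.
Proof. by apply/fsubsetP => _ /imfsetP[x _ ->]; apply: valP. Qed.

Lemma liftK : cancel lift (fsub S).
Proof. exact: FSetK. Qed.

Lemma fsubK_lift A : A `<=` S -> lift (fsub S A) = A.
Proof. exact: fsubK. Qed.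

Lemma lift_inj : injective lift.
Proof. exact: can_inj liftK. Qed.

Lemma card_lift X : #|` lift X| = #|X|.
Proof. by rewrite -(card_fsub (lift_sub X)) liftK. Qed.

Lemma card_imfset_lift (F : {set {set S}}) : #|` [fset lift B | B in F]| = #|F|.
Proof. by rewrite card_imfset /= -?cardE //; apply: lift_inj. Qed.

Lemma imfset_lift_preimage (Fi : {fset {fset V}}) :
  (forall A, A \in Fi -> A `<=` S) -> [fset lift B | B in [set B | lift B \in Fi]] = Fi.
Proof.
move=> FiS; apply/fsetP => A.
apply/imfsetP/idP => [[B /= + ->] | FiA]; first by rewrite inE.
by exists (fsub S A); rewrite /= ?inE fsubK_lift ?FiS.
Qed.

Lemma mem_lift X (x : S) : (val x \in lift X) = (x \in X).
Proof. by rewrite -{2}(liftK X) in_fsub. Qed.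

Lemma liftU1 x X : lift (x |: X) = lift X `|` [fset val x].
Proof.
apply/fsetP => v; rewrite in_fsetU in_fset1.
have [vS | vNS] := boolP (v \in S); last first.
  have notin Y : v \notin lift Y by apply: contra vNS; apply/fsubsetP/lift_sub.
  rewrite !(negbTE (notin _)) /=; apply/esym/negbTE.
  by apply: contraNneq vNS => ->; apply: valP.
by rewrite -[v]/(val [` vS]) !mem_lift in_setU1 (inj_eq val_inj) orbC.
Qed.

Lemma card_le_omega k (G : hypergraph V) (X : {set S}) :
    (forall Y : {set S}, Y \subset X -> #|Y| = k -> `[< G (lift Y) >]) ->
  #|X| <= omega k G S.
Proof.
move=> cliqueX; rewrite -card_lift /omega.
apply: (bigmaxn_sup_seq (lift X)) => //; first by rewrite fpowersetE lift_sub.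
apply/asboolP => A [sAX cardA]; have sAS := fsubset_trans sAX (lift_sub X).
rewrite -(fsubK_lift sAS); apply/asboolP/cliqueX; last by rewrite card_fsub.
by rewrite -[X]liftK; apply: subset_fsub sAX (lift_sub X).
Qed.

Lemma colorful_lift (H : int -> hypergraph V) k l : colorful_helly H k ->
  forall E : 'I_k -> {set S}, (forall j, ~~ `[< H (l + 1)%R (lift (E j)) >]) ->
  exists2 phi : 'I_k -> S,
    (forall j, phi j \in E j) & ~~ `[< H l (lift [set phi j | j in 'I_k]) >].
Proof.
move=> helly E nH1E.
have [[phi phiE /asboolPn nH0] | no_phi] := pselect (exists2 phi : 'I_k -> S,
  (forall j, phi j \in E j) & ~ H l (lift [set phi j | j in 'I_k])).
  by exists phi.
have [|j H1j] := helly (fun j => lift (E j)) l.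
  2: by case/negP: (nH1E j); apply/asboolP.
move=> _ [psi [psiE ->]].
have /fin_all_exists[phi phiE] j : exists x : S, (x \in E j) && (psi j == val x).
  by have /imfsetP[x /= xE ->] := psiE j; exists x; rewrite xE eqxx.
have -> : [fset psi j | j in 'I_k] = lift [set phi j | j in 'I_k].
  apply/fsetP => v; apply/imfsetP/imfsetP => [[j _ ->] | [_ /imsetP[j _ ->] ->]].
    by exists (phi j); [rewrite imset_f | case/andP: (phiE j) => _ /eqP].
  by exists j => //; case/andP: (phiE j) => _ /eqP.
apply: contrapT => nHl; apply: no_phi; exists phi => // j.
by case/andP: (phiE j).
Qed.

End Lift.

Local Open Scope fset_scope.
Local Open Scope ring_scope.

Theorem lemma2 (k : nat) :
  exists N : nat,
  forall (R : realFieldType) (V : choiceType) (H : int -> hypergraph V),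
    hyp_chain H -> colorful_helly H k ->
  forall (S : {fset V}) (n : nat), #|` S| = n -> (N <= n)%N ->
  forall (t : int) (c : R), 0 < c < 1 ->
    (omega k (H (t + 1)) S)%:R <= c * n%:R / 2 ->
  forall (i : nat), (0 < i <= k)%N ->
  forall Fi : {fset {fset V}},
    (forall A, A \in Fi -> in_binom S i A) ->
    c * ('C(n, i))%:R <= (#|` Fi|)%:R ->
  exists (Fim1 : {fset {fset V}}) (M : {fset V}),
    (forall A, A \in Fim1 -> in_binom S i.-1 A) /\
    in_binom S k M /\ ~ H t M /\
    (c / (12 * (k ^ 2)%:R)) ^+ k * ('C(n, i.-1))%:R <= (#|` Fim1|)%:R /\
    (forall A v, A \in Fim1 -> v \in M -> A `|` [fset v] \in Fi).
Proof.
exists (12 * k)%N => R V H [_ H_mono] helly S _ <- T_large t c /andP[c_gt0 _] w_small.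
move=> i /andP[i_gt0 i_le_k] Fi FiS Fi_dense; rewrite cardfE in T_large w_small Fi_dense *.
pose F := [set B : {set S} | lift B \in Fi].
have FiE : [fset lift B | B in F] = Fi by apply: imfset_lift_preimage => A /FiS[].
have k_gt0 : (0 < k)%N := leq_trans i_gt0 i_le_k.
have H_mono' (X : {set S}) : `[< H t (lift X) >] -> `[< H (t + 1) (lift X) >].
  by move/asboolP/H_mono/asboolP.
have cardF B : B \in F -> #|B| = i by rewrite inE => /FiS[_]; rewrite card_lift.
rewrite -FiE card_imfset_lift in Fi_dense.
have [M [cardM nH0M CM_large]] := exists_popular_non_edge
  (H0 := fun X => `[< H t (lift X) >]) k_gt0 H_mono' (@card_le_omega _ S k _)
  (colorful_lift helly (l := t)) c_gt0 i_gt0 i_le_k T_large w_small cardF Fi_dense.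
set CM := [set A | _] in CM_large.
exists [fset lift A | A in CM], (lift M); split; [|split; [|split; [|split]]].
- move=> _ /imfsetP[A /= + ->]; rewrite inE => /andP[/eqP cardA _].
  by split; [apply: lift_sub | rewrite card_lift].
- by split; [apply: lift_sub | rewrite card_lift].
- exact/asboolPn.
- by rewrite card_imfset_lift.
move=> _ v /imfsetP[A /= + ->] /imfsetP[x /= xM ->].
rewrite inE => /andP[_ /subsetP/(_ x xM)].
by rewrite inE => /andP[_]; rewrite inE liftU1.
Qed.
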